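(* Let $n,m\ge 2$, let $2\le r\le n$ and $2\le s\le m$, let $A\subseteq V(K_n)$ with $|A|=r$ and $B\subseteq V(K_m)$ with $|B|=s$. If $S$ is a total $2$-dominating set of $K_n\Box K_m$, then \[ \bigl|S\cap\bigl[(A\times V(K_m))\cup(V(K_n)\times B)\bigr]\bigr|\ge\gamma_{2t}(K_r\Box K_s). \]
   Context: For a graph $G=(V,E)$, a set $S\subseteq V$ is a total $2$-dominating set if every vertex of $V$ (including those in $S$) is adjacent to at least $2$ vertices of $S$; $\gamma_{2t}(G)$ is the minimum cardinality of such a set. $G\Box H$ denotes the Cartesian product: vertex set $V(G)\times V(H)$, with $(u_1,v_1)\sim(u_2,v_2)$ iff either $u_1=u_2$ and $v_1\sim v_2$, or $v_1=v_2$ and $u_1\sim u_2$. $K_n$ is the complete graph on $n$ vertices. *)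

From mathcomp Require Import all_boot all_order.
Set Implicit Arguments. Unset Strict Implicit. Unset Printing Implicit Defensive.

Definition Kadj (n : nat) : rel 'I_n := fun u v => u != v.

Definition cartadj (T U : finType) (g : rel T) (h : rel U) : rel (T * U) :=
  fun x y => ((x.1 == y.1) && h x.2 y.2) || ((x.2 == y.2) && g x.1 y.1).

Definition KK (n m : nat) : rel ('I_n * 'I_m) := cartadj (@Kadj n) (@Kadj m).

Definition total2dom (T : finType) (g : rel T) (S : {set T}) : bool :=
  [forall v, 2 <= #|[set u in S | g v u]|].

(* gamma_{2t}(G): minimum cardinality of a total 2-dominating set
   (default #|T| if none exists, never used for graphs that have one). *)
Definition gamma2t (T : finType) (g : rel T) : nat :=
  \big[minn/#|T|]_(S : {set T} | total2dom g S) #|S|.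

From HB Require Import structures.
From mathcomp Require Import all_boot all_order zify.
Set Implicit Arguments. Unset Strict Implicit. Unset Printing Implicit Defensive.

(* Inside the grid A x B, a vertex of K_n x K_m sees only the vertices of S in
   its own row and column.  So S induces on K_r x K_s a weighted total
   2-dominating set: the vertices of S inside the grid, plus one token for each
   vertex of S lying in a row of A or a column of B outside the grid; its weight
   is at most |S ∩ ((A x V) ∪ (V x B))|.  Such a weighted set can be replaced by
   a genuine total 2-dominating set that is no larger.  If the weight is at
   least 2s (resp. 2r), two full rows (columns) will do.  Otherwise a token can
   always be traded for a grid vertex without increasing the weight: place it
   on a cell of its row whose row and column already see three dominators, drop
   it when its row is full, or move the tokens of two otherwise empty rows into
   a common column; in every remaining configuration counting forces the weight
   to be at least 2r or 2s.  Induction on the number of tokens concludes. *)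

Section Weights.
Variables R C : finType.
Implicit Types (Z : {set R * C}) (tr : R -> nat) (tc : C -> nat) (a : R) (b : C).

Definition rdeg Z a := #|[set b | (a, b) \in Z]|.
Definition cdeg Z b := #|[set a | (a, b) \in Z]|.
Definition rweight Z tr a := rdeg Z a + tr a.
Definition cweight Z tc b := cdeg Z b + tc b.
Definition tokens tr tc := \sum_a tr a + \sum_b tc b.
Definition wcost Z tr tc := #|Z| + tokens tr tc.

(* [tr a] and [tc b] count dominators outside the grid in row [a] and column
   [b]; a cell sees every dominator of its row and column but itself, hence the
   correction [2 * ((a, b) \in Z)]. *)
Definition wt2dom Z tr tc :=
  forall a b, 2 + 2 * ((a, b) \in Z) <= rweight Z tr a + cweight Z tc b.

Definition reducible Z tr tc := exists Z' tr' tc',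
  [/\ wt2dom Z' tr' tc', wcost Z' tr' tc' <= wcost Z tr tc & tokens tr' tc' < tokens tr tc].

Definition transpose Z : {set C * R} := [set u | (u.2, u.1) \in Z].

Lemma sum_rdeg Z : \sum_a rdeg Z a = #|Z|.
Proof.
have -> : #|Z| = \sum_(u : R * C) ((u.1, u.2) \in Z : nat).
  by rewrite -sum1_card big_mkcond; apply: eq_bigr => -[].
rewrite -(pair_bigA _ (fun a b => ((a, b) \in Z : nat))); apply: eq_bigr => a _.
by rewrite /rdeg -sum1_card big_mkcond; apply: eq_bigr => b _; rewrite inE.
Qed.

Lemma rdeg_eq0 Z a b : rdeg Z a = 0 -> (a, b) \notin Z.
Proof. by move/eqP; rewrite cards_eq0 => /eqP/setP/(_ b); rewrite !inE => ->. Qed.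

Lemma rdeg_setX (A : {set R}) (B : {set C}) a :
  rdeg (setX A B) a = (a \in A) * #|B|.
Proof.
case: (boolP (a \in A)) => aA; [rewrite mul1n|rewrite mul0n -(cards0 C)].
all: by apply: eq_card => b; rewrite !inE ?aA ?(negbTE aA).
Qed.

Lemma cdeg_setX (A : {set R}) (B : {set C}) b :
  cdeg (setX A B) b = (b \in B) * #|A|.
Proof.
case: (boolP (b \in B)) => bB; [rewrite mul1n|rewrite mul0n -(cards0 R)].
all: by apply: eq_card => a; rewrite !inE ?bB ?(negbTE bB) ?andbT ?andbF.
Qed.

End Weights.

Section Transpose.
Variables R C : finType.
Implicit Types (Z : {set R * C}) (tr : R -> nat) (tc : C -> nat).

Lemma mem_transpose Z a b : ((b, a) \in transpose Z) = ((a, b) \in Z).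
Proof. by rewrite inE. Qed.

Lemma card_transpose Z : #|transpose Z| = #|Z|.
Proof.
have -> : transpose Z = [set (u.2, u.1) | u in Z].
  apply/setP => -[b a]; rewrite inE /=; apply/idP/imsetP => [h|[[x y] h [-> ->]]] //.
  by exists (a, b).
by apply: card_imset => -[x y] [u v] [-> ->].
Qed.

Lemma rdeg_transpose Z b : rdeg (transpose Z) b = cdeg Z b.
Proof. by apply: eq_card => a; rewrite !inE. Qed.

Lemma cdeg_transpose Z a : cdeg (transpose Z) a = rdeg Z a.
Proof. by apply: eq_card => b; rewrite !inE. Qed.

Lemma rweight_transpose Z tc b : rweight (transpose Z) tc b = cweight Z tc b.
Proof. by rewrite /rweight rdeg_transpose. Qed.

Lemma cweight_transpose Z tr a : cweight (transpose Z) tr a = rweight Z tr a.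
Proof. by rewrite /cweight cdeg_transpose. Qed.

Lemma wcost_transpose Z tr tc : wcost (transpose Z) tc tr = wcost Z tr tc.
Proof. by rewrite /wcost /tokens card_transpose [X in _ + X]addnC. Qed.

Lemma wt2dom_transpose Z tr tc : wt2dom Z tr tc -> wt2dom (transpose Z) tc tr.
Proof.
move=> hZ b a; rewrite mem_transpose [X in _ <= X]addnC.
by rewrite rweight_transpose cweight_transpose; apply: hZ.
Qed.

End Transpose.

Lemma reducible_transpose (R C : finType) (Z : {set R * C}) tr tc :
  reducible (transpose Z) tc tr -> reducible Z tr tc.
Proof.
case=> Z' [tc' [tr' [hZ' hcost htok]]]; exists (transpose Z'), tr', tc'; split.
- exact: wt2dom_transpose.
- by rewrite wcost_transpose -(wcost_transpose Z).
- by rewrite /tokens addnC [X in _ < X]addnC.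
Qed.

Lemma sum_cdeg (R C : finType) (Z : {set R * C}) : \sum_b cdeg Z b = #|Z|.
Proof.
by rewrite -card_transpose -sum_rdeg; apply: eq_bigr => b _; rewrite rdeg_transpose.
Qed.

Section Shift.
Variables R C : finType.
Implicit Types (Z : {set R * C}) (tr : R -> nat) (tc : C -> nat) (a x : R) (b y : C).

Definition drop_token tr a : R -> nat := fun x => if x == a then (tr x).-1 else tr x.

Lemma tokens_drop tr tc a : 0 < tr a -> (tokens (drop_token tr a) tc).+1 = tokens tr tc.
Proof.
move=> tr_a; rewrite /tokens -addSn; congr (_ + _).
rewrite [\sum_x tr x](bigD1 a) // [\sum_x _ x](bigD1 a) //= {1}/drop_token eqxx.
rewrite -addSn prednK //.
by congr (_ + _); apply: eq_bigr => x /negbTE; rewrite /drop_token => ->.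
Qed.

Lemma rweight_shift Z tr a b x : 0 < tr a -> (a, b) \notin Z ->
  rweight ((a, b) |: Z) (drop_token tr a) x = rweight Z tr x.
Proof.
move=> tr_a abZ; rewrite /rweight /rdeg /drop_token; case: eqP => [->|xa].
  rewrite (_ : [set y | (a, y) \in (a, b) |: Z] = b |: [set y | (a, y) \in Z]).
    by rewrite cardsU1 inE (negbTE abZ) addSnnS prednK.
  by apply/setP => y; rewrite !inE xpair_eqE eqxx.
by congr (_ + _); apply: eq_card => y; rewrite !inE xpair_eqE; case: eqP.
Qed.

Lemma cweight_shift Z tc a b y : (a, b) \notin Z ->
  cweight ((a, b) |: Z) tc y = cweight Z tc y + (y == b).
Proof.
move=> abZ; rewrite /cweight /cdeg addnAC; congr (_ + _); case: eqP => [->|/eqP yb].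
  rewrite (_ : [set x | (x, b) \in (a, b) |: Z] = a |: [set x | (x, b) \in Z]).
    by rewrite cardsU1 inE (negbTE abZ) addnC.
  by apply/setP => x; rewrite !inE xpair_eqE eqxx andbT.
by rewrite addn0; apply: eq_card => x; rewrite !inE xpair_eqE (negbTE yb) andbF.
Qed.

Lemma wcost_shift Z tr tc a b : 0 < tr a -> (a, b) \notin Z ->
  wcost ((a, b) |: Z) (drop_token tr a) tc = wcost Z tr tc.
Proof.
by move=> tr_a abZ; rewrite /wcost cardsU1 abZ -(tokens_drop tc tr_a) addSnnS.
Qed.

Lemma wt2dom_grow Z tr tc Z' tr' tc' : wt2dom Z tr tc ->
  (forall x, rweight Z tr x <= rweight Z' tr' x) ->
  (forall y, cweight Z tc y <= cweight Z' tc' y) ->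
  (forall x y, (x, y) \in Z' -> (x, y) \notin Z ->
     4 <= rweight Z' tr' x + cweight Z' tc' y) ->
  wt2dom Z' tr' tc'.
Proof.
move=> hZ hr hc hnew x y.
have grow := leq_trans (hZ x y) (leq_add (hr x) (hc y)).
case: (boolP ((x, y) \in Z)) => xyZ in grow *.
  by case: ((x, y) \in Z') => /=; lia.
by case: (boolP ((x, y) \in Z')) => [/hnew/(_ xyZ)|].
Qed.

End Shift.

Section Moves.
Variables (R C : finType) (Z : {set R * C}) (tr : R -> nat) (tc : C -> nat).
Hypothesis hZ : wt2dom Z tr tc.

Lemma reducible_shift a b : 0 < tr a -> (a, b) \notin Z ->
  3 <= rweight Z tr a + cweight Z tc b -> reducible Z tr tc.
Proof.
move=> tr_a abZ h3; exists ((a, b) |: Z), (drop_token tr a), tc; split.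
- apply: (wt2dom_grow hZ) => [x|y|x y]; first by rewrite rweight_shift.
    by rewrite cweight_shift // leq_addr.
  rewrite !inE xpair_eqE => /orP[/andP[/eqP-> /eqP->] _|-> //].
  by rewrite rweight_shift // cweight_shift // eqxx; lia.
- by rewrite wcost_shift.
- by rewrite -(tokens_drop tc tr_a).
Qed.

Lemma reducible_shift2 a1 a2 b : a1 != a2 -> 0 < tr a1 -> 0 < tr a2 ->
  (a1, b) \notin Z -> (a2, b) \notin Z -> 0 < cweight Z tc b -> reducible Z tr tc.
Proof.
move=> ne tr_a1 tr_a2 a1bZ a2bZ cw_b.
set Z1 := (a1, b) |: Z; set tr1 := drop_token tr a1.
have tr1_a2 : 0 < tr1 a2 by rewrite /tr1 /drop_token eq_sym (negbTE ne).
have a2bZ1 : (a2, b) \notin Z1 by rewrite !inE xpair_eqE eq_sym (negbTE ne).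
have rw x : rweight ((a2, b) |: Z1) (drop_token tr1 a2) x = rweight Z tr x.
  by rewrite !rweight_shift.
have cw y : cweight ((a2, b) |: Z1) tc y = cweight Z tc y + (y == b) + (y == b).
  by rewrite !cweight_shift.
exists ((a2, b) |: Z1), (drop_token tr1 a2), tc; split.
- apply: (wt2dom_grow hZ) => [x|y|x y]; first by rewrite rw.
    by rewrite cw -addnA leq_addr.
  rewrite rw cw !inE !xpair_eqE => + xyZ; rewrite (negbTE xyZ) orbF.
  by case/orP=> /andP[/eqP-> /eqP->]; rewrite eqxx /rweight; lia.
- by rewrite !wcost_shift.
- by rewrite -(tokens_drop tc tr_a1) -(tokens_drop tc tr1_a2).
Qed.

Lemma reducible_drop a : 0 < tr a -> (forall b, (a, b) \in Z) -> 3 <= #|C| ->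
  (forall b, 0 < cweight Z tc b) -> reducible Z tr tc.
Proof.
move=> tr_a full C3 cw_pos; exists Z, (drop_token tr a), tc; split.
- move=> x y; rewrite /rweight /drop_token; case: eqP => [->|_]; last exact: hZ.
  have -> : rdeg Z a = #|C| by apply: eq_card => b; rewrite inE full.
  by rewrite full; have := cw_pos y; lia.
- by rewrite /wcost -(tokens_drop tc tr_a) leq_add2l.
- by rewrite -(tokens_drop tc tr_a).
Qed.

End Moves.

Section Bounds.
Variables (R C : finType) (Z : {set R * C}) (tr : R -> nat) (tc : C -> nat).
Hypothesis hZ : wt2dom Z tr tc.

Lemma sum_rweight : \sum_a rweight Z tr a = #|Z| + \sum_a tr a.
Proof. by rewrite big_split sum_rdeg. Qed.

Lemma sum_cweight : \sum_b cweight Z tc b = #|Z| + \sum_b tc b.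
Proof. by rewrite big_split sum_cdeg. Qed.

Lemma rweight_gt0 a : wcost Z tr tc < 2 * #|C| -> 0 < rweight Z tr a.
Proof.
move=> cost_lt; rewrite lt0n; apply/eqP => rw0.
have : #|C| * 2 <= \sum_b cweight Z tc b.
  by rewrite -sum_nat_const; apply: leq_sum => b _; have := hZ a b; rewrite rw0; lia.
by rewrite sum_cweight; move: cost_lt; rewrite /wcost /tokens; lia.
Qed.

End Bounds.

Lemma cweight_gt0 (R C : finType) (Z : {set R * C}) tr tc b : wt2dom Z tr tc ->
  wcost Z tr tc < 2 * #|R| -> 0 < cweight Z tc b.
Proof.
move=> hZ cost_lt; rewrite -rweight_transpose.
by apply: (rweight_gt0 (wt2dom_transpose hZ)); rewrite wcost_transpose.
Qed.

Section TokenStep.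
Variables (R C : finType) (Z : {set R * C}) (tr : R -> nat) (tc : C -> nat).
Hypotheses (hZ : wt2dom Z tr tc) (hR : 2 <= #|R|).
Hypotheses (costR : wcost Z tr tc < 2 * #|R|) (costC : wcost Z tr tc < 2 * #|C|).

Lemma row_token_step a : 0 < tr a ->
  reducible Z tr tc \/ [/\ rdeg Z a = 0, tr a = 1 & forall b, cweight Z tc b = 1].
Proof.
move=> tr_a; have cw_pos b : 0 < cweight Z tc b := cweight_gt0 b hZ costR.
case: (pickP [pred b | ((a, b) \notin Z) && (2 < rweight Z tr a + cweight Z tc b)]).
  by move=> b /andP[abZ h3]; left; apply: (reducible_shift hZ tr_a abZ h3).
move=> high; have low b : (a, b) \notin Z -> rweight Z tr a + cweight Z tc b <= 2.
  by move=> abZ; move: (high b); rewrite /= abZ ltnNge => /negbFE.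
case: (pickP [pred b | (a, b) \notin Z]) => [b1 /= ab1Z|out]; last first.
  have full b : (a, b) \in Z by apply/negbFE; exact: out.
  case: (leqP 3 #|C|) => [C3|C2]; first by left; apply: (reducible_drop hZ tr_a full C3 cw_pos).
  have rdeg_a : rdeg Z a = #|C| by apply: eq_card => b; rewrite inE full.
  have : rweight Z tr a + \sum_(x | x != a) 1 <= \sum_x rweight Z tr x.
    by rewrite [X in _ <= X](bigD1 a) //= leq_add2l; apply: leq_sum => x _; apply: rweight_gt0.
  rewrite sum1_card cardC1 sum_rweight /rweight rdeg_a.
  by move: costC; rewrite /wcost /tokens; lia.
right; have := low b1 ab1Z; have := cw_pos b1; rewrite /rweight => ? ?.
have rdeg_a : rdeg Z a = 0 by lia.
split=> [||b]; [done|lia|].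
have := low b (rdeg_eq0 b rdeg_a); have := cw_pos b; rewrite /rweight; lia.
Qed.

End TokenStep.

Lemma col_token_step (R C : finType) (Z : {set R * C}) tr tc b :
  wt2dom Z tr tc -> 2 <= #|C| -> wcost Z tr tc < 2 * #|R| -> wcost Z tr tc < 2 * #|C| ->
  0 < tc b ->
  reducible Z tr tc \/ [/\ cdeg Z b = 0, tc b = 1 & forall a, rweight Z tr a = 1].
Proof.
move=> hZ hC costR costC tc_b.
have := row_token_step (wt2dom_transpose hZ) hC _ _ tc_b; rewrite !wcost_transpose.
case=> // [/reducible_transpose|[]]; [by left|rewrite rdeg_transpose => ? ? thin].
by right; split=> // a; rewrite -cweight_transpose.
Qed.

Section Reduce.
Variables (R C : finType) (Z : {set R * C}) (tr : R -> nat) (tc : C -> nat).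
Hypotheses (hZ : wt2dom Z tr tc) (hR : 2 <= #|R|) (hC : 2 <= #|C|).
Hypotheses (costR : wcost Z tr tc < 2 * #|R|) (costC : wcost Z tr tc < 2 * #|C|).

Lemma reducible_row_token a0 : 0 < tr a0 -> reducible Z tr tc.
Proof.
move=> tr_a0; have [//|[r0 t0 thinC]] := row_token_step hZ hR costR costC tr_a0.
case: (pickP [pred a | (a != a0) && (0 < tr a)]) => [a1 /andP[a1a0 tr_a1]|no_tr].
  have [//|[r1 _ _]] := row_token_step hZ hR costR costC tr_a1.
  have [b0 _] := card_gt0P (ltnW hC).
  by apply: (reducible_shift2 hZ _ tr_a0 tr_a1 (rdeg_eq0 b0 r0) (rdeg_eq0 b0 r1));
    rewrite ?thinC // eq_sym.
have {}no_tr a : a != a0 -> tr a = 0.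
  by move=> aa0; move: (no_tr a); rewrite /= aa0 lt0n => /negbFE/eqP.
case: (pickP [pred b | 0 < tc b]) => [b tc_b|no_tc].
  have [//|[_ _ thinR]] := col_token_step hZ hC costR costC tc_b.
  (* all rows and columns have weight 1, so Z is empty and the weight is #|R| + #|C| *)
  have Z0 : #|Z| = 0.
    apply/eqP; rewrite cards_eq0; apply/eqP/setP => -[x y]; rewrite inE.
    by apply/negbTE/negP => xyZ; have := hZ x y; rewrite xyZ thinR thinC.
  have sR : #|R| = #|Z| + \sum_a tr a.
    by rewrite -sum_rweight -sum1_card; apply: eq_bigr => x _; rewrite thinR.
  have sC : #|C| = #|Z| + \sum_b tc b.
    by rewrite -sum_cweight -sum1_card; apply: eq_bigr => y _; rewrite thinC.
  by move: costR costC; rewrite /wcost /tokens Z0; lia.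
(* every row but a0 meets Z, in a cell whose column has weight 1 *)
have rdeg3 x : x != a0 -> 3 <= rdeg Z x.
  move=> xa0; have := rweight_gt0 hZ x costC; rewrite /rweight no_tr // addn0.
  case/card_gt0P => b; rewrite inE => xbZ.
  by have := hZ x b; rewrite xbZ thinC /rweight no_tr //; lia.
have : \sum_(x | x != a0) 3 <= \sum_x rdeg Z x.
  by rewrite [X in _ <= X](bigD1 a0) //=; apply: leq_trans _ (leq_addl _ _); apply: leq_sum.
have tok : tokens tr tc = 1.
  rewrite /tokens (bigD1 a0) //= t0 big1 => [|x /no_tr //].
  by rewrite big1 // => b _; move: (no_tc b); rewrite /= lt0n => /negbFE/eqP.
rewrite sum_nat_const cardC1 sum_rdeg; move: costR; rewrite /wcost tok; lia.
Qed.

End Reduce.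

Lemma reducible_of_tokens (R C : finType) (Z : {set R * C}) tr tc :
  wt2dom Z tr tc -> 2 <= #|R| -> 2 <= #|C| ->
  wcost Z tr tc < 2 * #|R| -> wcost Z tr tc < 2 * #|C| ->
  0 < tokens tr tc -> reducible Z tr tc.
Proof.
move=> hZ hR hC costR costC.
case: (pickP [pred a | 0 < tr a]) => [a tr_a _|no_tr].
  exact: (reducible_row_token hZ hR hC costR costC tr_a).
rewrite /tokens big1 => [|a _]; last by move: (no_tr a); rewrite /= lt0n => /negbFE/eqP.
rewrite lt0n sum_nat_eq0 => /forallPn[b]; rewrite -lt0n => tc_b.
apply: reducible_transpose; apply: (reducible_row_token (wt2dom_transpose hZ) hC hR _ _ tc_b).
all: by rewrite wcost_transpose.
Qed.

Lemma wt2dom_two_rows (R C : finType) (a1 a2 : R) : a1 != a2 -> 2 <= #|C| ->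
  wt2dom (setX [set a1; a2] [set: C]) (fun _ => 0) (fun _ => 0).
Proof.
move=> ne hC a b; rewrite /rweight /cweight rdeg_setX cdeg_setX cards2 ne in_setX !inE.
move: hC; rewrite andbT -cardsT; case: (_ || _) => /=; lia.
Qed.

Theorem wt2dom_purify (R C : finType) (Z : {set R * C}) tr tc :
  2 <= #|R| -> 2 <= #|C| -> wt2dom Z tr tc ->
  exists2 G : {set R * C}, wt2dom G (fun _ => 0) (fun _ => 0) & #|G| <= wcost Z tr tc.
Proof.
move=> hR hC; have [k] := ubnP (tokens tr tc).
elim: k => // k IH in Z tr tc *; rewrite ltnS => tok_k hZ.
case: (leqP (2 * #|C|) (wcost Z tr tc)) => [costC|costC].
  have [a1 [a2 [_ _ a12]]] := card_gt1P hR.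
  exists (setX [set a1; a2] [set: C]); first exact: wt2dom_two_rows.
  by rewrite cardsX cards2 a12 cardsT.
case: (leqP (2 * #|R|) (wcost Z tr tc)) => [costR|costR].
  have [b1 [b2 [_ _ b12]]] := card_gt1P hC.
  exists (transpose (setX [set b1; b2] [set: R])).
    exact: wt2dom_transpose (wt2dom_two_rows b12 hR).
  by rewrite card_transpose cardsX cards2 b12 cardsT.
case: (posnP (tokens tr tc)) => [tok0|tok_pos].
  exists Z; last exact: leq_addr.
  move/eqP: tok0; rewrite addn_eq0 !sum_nat_eq0 => /andP[/forallP tr0 /forallP tc0] a b.
  by have := hZ a b; rewrite /rweight /cweight (eqP (tr0 a)) (eqP (tc0 b)).
have [Z' [tr' [tc' [hZ' cost' tok']]]] := reducible_of_tokens hZ hR hC costR costC tok_pos.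
have [G hG cardG] := IH Z' tr' tc' (leq_trans tok' tok_k) hZ'.
by exists G; last exact: leq_trans cardG cost'.
Qed.

(* [minn] has no unit on [nat], but [big_rem_AC] only needs a commutative
   semigroup. *)
HB.instance Definition _ := SemiGroup.isComLaw.Build nat minn minnA minnC.

Lemma gamma2t_le (T : finType) (g : rel T) (X : {set T}) :
  total2dom g X -> gamma2t g <= #|X|.
Proof. by move=> gX; rewrite /gamma2t (big_rem_AC _ _ _ _ (mem_index_enum X)) gX geq_minl. Qed.

Lemma card_KK_nbhd n m (X : {set 'I_n * 'I_m}) a b :
  #|[set u in X | KK (a, b) u]| + 2 * ((a, b) \in X) = rdeg X a + cdeg X b.
Proof.
set R1 := [set y | (a, y) \in X]; set C1 := [set x | (x, b) \in X].
have -> : [set u in X | KK (a, b) u] = setX [set a] (R1 :\ b) :|: setX (C1 :\ a) [set b].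
  apply/setP => -[x y]; rewrite !inE /KK /cartadj /Kadj /= [a == x]eq_sym [b == y]eq_sym.
  by case: (x =P a) => [->|_]; case: (y =P b) => [->|_]; rewrite ?andbF ?andbT ?orbF.
rewrite cardsU (_ : _ :&: _ = set0); last first.
  by apply/setP => -[x y]; rewrite !inE; case: (x == a); rewrite ?andbF.
rewrite cards0 subn0 !cardsX !cards1 mul1n muln1 /rdeg /cdeg -/R1 -/C1.
by rewrite (cardsD1 b R1) (cardsD1 a C1) !inE; case: ((a, b) \in X); lia.
Qed.

Lemma total2domKP n m (X : {set 'I_n * 'I_m}) :
  total2dom (@KK n m) X <-> wt2dom X (fun _ => 0) (fun _ => 0).
Proof.
rewrite /total2dom /wt2dom /rweight /cweight; split=> [/forallP hX a b|hX].
  by rewrite !addn0 -card_KK_nbhd leq_add2r; apply: hX (a, b).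
by apply/forallP => -[a b]; have := hX a b; rewrite !addn0 -card_KK_nbhd leq_add2r.
Qed.

Lemma card_enum_val_preim (T : finType) (B : {set T}) (P : pred T) :
  #|[set j : 'I_#|B| | P (enum_val j)]| = #|[set y in B | P y]|.
Proof.
rewrite -[RHS]sum1_card -[LHS]sum1_card.
rewrite (eq_bigl (fun y => (y \in B) && P y)) => [|y]; last by rewrite inE.
by rewrite big_enum_val_cond; apply: eq_bigl => j; rewrite inE.
Qed.

Lemma sum_rdeg_enum (R C : finType) (A : {set R}) (X : {set R * C}) :
  X \subset setX A [set: C] -> \sum_(i < #|A|) rdeg X (enum_val i) = #|X|.
Proof.
move=> XA; rewrite -(big_enum_val (A := mem A) (rdeg X)) -[RHS]sum_rdeg big_mkcond /=.
apply: eq_bigr => a _; case: ifP => // /negbT aA; apply/esym/eqP; rewrite cards_eq0.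
by apply/eqP/setP => y; rewrite !inE; apply/negbTE/negP => /(subsetP XA); rewrite !inE (negbTE aA).
Qed.

Lemma sum_cdeg_enum (R C : finType) (B : {set C}) (X : {set R * C}) :
  X \subset setX [set: R] B -> \sum_(j < #|B|) cdeg X (enum_val j) = #|X|.
Proof.
move=> XB; rewrite -card_transpose -(sum_rdeg_enum (A := B)).
  by apply: eq_bigr => j _; rewrite rdeg_transpose.
by apply/subsetP => -[b a]; rewrite mem_transpose => /(subsetP XB); rewrite !inE andbC.
Qed.

Section Trace.
Variables (n m : nat) (A : {set 'I_n}) (B : {set 'I_m}) (S : {set 'I_n * 'I_m}).

(* S inside the grid, reindexed by 'I_#|A| * 'I_#|B|; the vertices of S in
   the rows of A (columns of B) outside the grid become tokens. *)
Definition trace : {set 'I_#|A| * 'I_#|B|} := [set u | (enum_val u.1, enum_val u.2) \in S].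
Definition trace_row (i : 'I_#|A|) := rdeg (S :&: setX A (~: B)) (enum_val i).
Definition trace_col (j : 'I_#|B|) := cdeg (S :&: setX (~: A) B) (enum_val j).

Lemma rdeg_trace i : rdeg trace i = rdeg (S :&: setX A B) (enum_val i).
Proof.
rewrite /rdeg (eq_card (B := [set j | (enum_val i, enum_val j) \in S])) => [|j]; last first.
  by rewrite !inE.
rewrite (card_enum_val_preim B (fun y => (enum_val i, y) \in S)).
by apply: eq_card => y; rewrite !inE enum_valP andbC.
Qed.

Lemma cdeg_trace j : cdeg trace j = cdeg (S :&: setX A B) (enum_val j).
Proof.
rewrite /cdeg (eq_card (B := [set i | (enum_val i, enum_val j) \in S])) => [|i]; last first.
  by rewrite !inE.
rewrite (card_enum_val_preim A (fun x => (x, enum_val j) \in S)).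
by apply: eq_card => x; rewrite !inE enum_valP andbC andbT.
Qed.

Lemma rweight_trace i : rweight trace trace_row i = rdeg S (enum_val i).
Proof.
rewrite /rweight rdeg_trace /trace_row /rdeg -(cardsID B [set y | (enum_val i, y) \in S]).
by congr (_ + _); apply: eq_card => y; rewrite !inE enum_valP andbC.
Qed.

Lemma cweight_trace j : cweight trace trace_col j = cdeg S (enum_val j).
Proof.
rewrite /cweight cdeg_trace /trace_col /cdeg -(cardsID A [set x | (x, enum_val j) \in S]).
by congr (_ + _); apply: eq_card => x; rewrite !inE enum_valP /= andbT // andbC.
Qed.

Lemma wt2dom_trace : total2dom (@KK n m) S -> wt2dom trace trace_row trace_col.
Proof.
move/total2domKP => hS i j; rewrite rweight_trace cweight_trace inE /=.
by have := hS (enum_val i) (enum_val j); rewrite /rweight /cweight !addn0.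
Qed.

Lemma wcost_trace :
  wcost trace trace_row trace_col <= #|S :&: (setX A [set: 'I_m] :|: setX [set: 'I_n] B)|.
Proof.
rewrite /wcost /tokens -[#|trace|]sum_rdeg (eq_bigr _ (fun i _ => rdeg_trace i)).
have rowsA X : S :&: setX A X \subset setX A [set: 'I_m].
  by apply/subsetP => -[x y]; rewrite !inE => /and3P[_ ->].
have colsB : S :&: setX (~: A) B \subset setX [set: 'I_n] B.
  by apply/subsetP => -[x y]; rewrite !inE => /and3P[_ _ ->].
rewrite !sum_rdeg_enum ?sum_cdeg_enum //.
set Y := S :&: (_ :|: _).
rewrite -(cardsID (setX A B) Y) -(cardsID (setX A [set: 'I_m]) (Y :\: setX A B)).
rewrite !leq_add ?subset_leq_card //; apply/subsetP => -[x y]; rewrite !inE /=.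
all: by case: (x \in A); case: (y \in B); rewrite ?andbF ?andbT ?orbT.
Qed.

End Trace.

Unset Implicit Arguments.

Theorem lemma6 (n m r s : nat) (A : {set 'I_n}) (B : {set 'I_m})
  (S : {set 'I_n * 'I_m}) :
  2 <= n -> 2 <= m -> 2 <= r <= n -> 2 <= s <= m ->
  #|A| = r -> #|B| = s ->
  total2dom (@KK n m) S ->
  gamma2t (@KK r s) <= #|S :&: (setX A [set: 'I_m] :|: setX [set: 'I_n] B)|.
Proof.
move=> _ _ /andP[r2 _] /andP[s2 _] rA sB hS; subst r s.
have := wt2dom_purify _ _ (wt2dom_trace (A := A) (B := B) hS).
rewrite !card_ord => /(_ r2 s2) [G hG cardG].
apply: leq_trans (gamma2t_le (proj2 (total2domKP G) hG)) _.
exact: leq_trans cardG (wcost_trace A B S).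
Qed.
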